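(* Let $k\ge 1$, $H>0$, $\beta>0$, $h>0$, and consider a hierarchical-leadership flock $[0,1,\dots,k]$ with leader sets $\mathcal{L}(i)\subseteq\{0,\dots,i-1\}$, $\mathcal{L}(i)\neq\varnothing$ for $i\ge1$. Let $\tilde x_0[n],\dots,\tilde x_k[n]\in\mathbb{R}^3$ ($n\ge 0$) be positions, for $j\in\mathcal{L}(i)$ let $a_{ij}[n]=H/(1+|\tilde x_j[n]-\tilde x_i[n]|^2/2)^{\beta}$ and $a_{ij}[n]=0$ otherwise, $d_i[n]=\sum_{j\in\mathcal{L}(i)}a_{ij}[n]$, and let $L_n$ be the $k\times k$ matrix (indices $1,\dots,k$) with $(L_n)_{ii}=d_i[n]$, $(L_n)_{ij}=-a_{ij}[n]$ for $1\le j<i$, $(L_n)_{ij}=0$ for $j>i$; put $S[n]=I-hL_n$. Suppose $|x[n]|^2\le B$ for all $n\ge0$, where $x[n]=(\tilde x_i[n]-\tilde x_0[n])_{i=1}^k\in\mathbb{R}^{3k}$, let $d_\ast=H/(1+B)^\beta$, $\rho_h=1-hd_\ast$, and assume $0<h<\frac{1}{2kH}$. Let $T$ be the $k\times k$ matrix with $T_{ij}=1$ for $i\ge j$ and $T_{ij}=0$ otherwise. Then for all $n\ge 0$, \[S[n]\prec\rho_hT\quad\text{and}\quad S[n-1]\cdots S[0]\prec\rho_h^{\,n}T^n.\]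
   Context: $B\prec C$ means $|b_{ij}|\le c_{ij}$ for all entries. A hierarchical-leadership flock is one whose agents are labeled $0,\dots,k$ so that $a_{ij}>0$ only if $j<i$ and each agent $i>0$ has a nonempty leader set $\mathcal{L}(i)=\{j:a_{ij}>0\}$. For $n=0$ the empty product is the identity. *)

From mathcomp Require Import all_boot all_order all_algebra.
From mathcomp Require Import reals exp.
Set Implicit Arguments. Unset Strict Implicit. Unset Printing Implicit Defensive.
Import Order.TTheory GRing.Theory Num.Theory.
Local Open Scope ring_scope.

Section Flock.
Variable R : realType.

Definition mx_prec m n (B C : 'M[R]_(m, n)) : Prop :=
  forall i j, `|B i j| <= C i j.

Definition sqnorm3 (v : 'rV[R]_3) : R := \sum_(l < 3) v 0 l ^+ 2.

Definition hierarchical (k : nat) (L : 'I_k.+1 -> {set 'I_k.+1}) : Prop :=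
  (forall i j : 'I_k.+1, j \in L i -> (j < i)%N) /\
  (forall i : 'I_k.+1, (0 < i)%N -> L i != set0).

Definition weight (H beta : R) (k : nat) (L : 'I_k.+1 -> {set 'I_k.+1})
  (x : 'I_k.+1 -> 'rV[R]_3) (i j : 'I_k.+1) : R :=
  if j \in L i then H / (1 + sqnorm3 (x j - x i) / 2) `^ beta else 0.

Definition degree (H beta : R) (k : nat) (L : 'I_k.+1 -> {set 'I_k.+1})
  (x : 'I_k.+1 -> 'rV[R]_3) (i : 'I_k.+1) : R :=
  \sum_(j in L i) weight H beta L x i j.

(* L_n, indexed by agents 1..k (the matrix index i : 'I_k stands for agent i+1) *)
Definition lapl (H beta : R) (k : nat) (L : 'I_k.+1 -> {set 'I_k.+1})
  (x : 'I_k.+1 -> 'rV[R]_3) : 'M[R]_k :=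
  \matrix_(i < k, j < k)
    if i == j then degree H beta L x (lift ord0 i)
    else if (j < i)%N then - weight H beta L x (lift ord0 i) (lift ord0 j)
    else 0.

Definition Smx (H beta h : R) (k : nat) (L : 'I_k.+1 -> {set 'I_k.+1})
  (x : 'I_k.+1 -> 'rV[R]_3) : 'M[R]_k :=
  1%:M - h *: lapl H beta L x.

Fixpoint Sprod (H beta h : R) (k : nat) (L : 'I_k.+1 -> {set 'I_k.+1})
  (X : nat -> 'I_k.+1 -> 'rV[R]_3) (n : nat) : 'M[R]_k :=
  match n with
  | 0 => 1%:M
  | n'.+1 => Smx H beta h L (X n') *m Sprod H beta h L X n'
  end.

Definition Tmx (k : nat) : 'M[R]_k := \matrix_(i < k, j < k) (j <= i)%N%:R.

Fixpoint mxpow (k : nat) (M : 'M[R]_k) (n : nat) : 'M[R]_k :=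
  match n with
  | 0 => 1%:M
  | n'.+1 => M *m mxpow M n'
  end.

(* |x[n]|^2 with x[n] = (x_i[n] - x_0[n])_{i=1..k} in R^{3k} *)
Definition rel_sqnorm (k : nat) (x : 'I_k.+1 -> 'rV[R]_3) : R :=
  \sum_(i < k) sqnorm3 (x (lift ord0 i) - x ord0).

End Flock.

From mathcomp Require Import all_boot all_order all_algebra.
From mathcomp Require Import reals exp.
From mathcomp Require Import lra.
Import Order.TTheory GRing.Theory Num.Theory.
Local Open Scope ring_scope.

(* Every leader of agent i is within squared distance 2|x|^2 <= 2B of it, so
   each weight a_ij with j a leader is at least d_* = H/(1+B)^beta, while all
   weights are at most H.  Hence every diagonal entry 1 - h d_i of S lies in
   [1 - hkH, 1 - h d_*], a nonnegative range because 2hkH < 1, and every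
   nonzero off-diagonal entry h a_ij is at most hH <= 1 - h d_*.  This gives
   S ≺ rho T, and entrywise domination is preserved by matrix products. *)

Set Implicit Arguments.
Unset Strict Implicit.

Section Domination.
Context {R : realType}.

Lemma mx_prec_mulmx m n p (A C : 'M[R]_(m, n)) (B D : 'M[R]_(n, p)) :
  mx_prec A C -> mx_prec B D -> mx_prec (A *m B) (C *m D).
Proof.
move=> AC BD i j; rewrite !mxE; apply: le_trans (ler_norm_sum _ _ _) _.
by apply: ler_sum => l _; rewrite normrM ler_pM.
Qed.

Lemma mx_prec_Sprod (H beta h r : R) k (L : 'I_k.+1 -> {set 'I_k.+1})
    (X : nat -> 'I_k.+1 -> 'rV[R]_3) (M : 'M[R]_k) :
    (forall n, mx_prec (Smx H beta h L (X n)) (r *: M)) ->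
  forall n, mx_prec (Sprod H beta h L X n) (r ^+ n *: mxpow M n).
Proof.
move=> SM; elim=> [|n IHn] /=.
  by move=> i j; rewrite scale1r !mxE; case: eqP; rewrite ?normr1 ?normr0.
rewrite exprS -scalerA scalemxAr scalemxAl.
exact: mx_prec_mulmx (SM n) IHn.
Qed.

End Domination.

Section Distances.
Context {R : realType}.

Lemma sqnorm3_ge0 (v : 'rV[R]_3) : 0 <= sqnorm3 v.
Proof. by apply: sumr_ge0 => l _; rewrite sqr_ge0. Qed.

Lemma sqnorm3_0 : sqnorm3 (0 : 'rV[R]_3) = 0.
Proof. by rewrite /sqnorm3 big1 // => l _; rewrite mxE expr0n. Qed.

Lemma sqnorm3_subr_le (u v : 'rV[R]_3) :
  sqnorm3 (u - v) <= 2 * (sqnorm3 u + sqnorm3 v).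
Proof.
rewrite /sqnorm3 -big_split mulr_sumr /=; apply: ler_sum => l _.
rewrite !mxE; have := sqr_ge0 (u 0 l + v 0 l); rewrite !expr2; nra.
Qed.

Lemma rel_sqnorm_ge0 k (x : 'I_k.+1 -> 'rV[R]_3) : 0 <= rel_sqnorm x.
Proof. by apply: sumr_ge0 => i _; apply: sqnorm3_ge0. Qed.

Lemma rel_sqnormE k (x : 'I_k.+1 -> 'rV[R]_3) :
  rel_sqnorm x = \sum_(p < k.+1) sqnorm3 (x p - x ord0).
Proof. by rewrite big_ord_recl subrr sqnorm3_0 add0r. Qed.

Lemma sqnorm3_agents_le k (x : 'I_k.+1 -> 'rV[R]_3) (i j : 'I_k.+1) :
  sqnorm3 (x j - x i) <= 2 * rel_sqnorm x.
Proof.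
have [<-|nij] := eqVneq i j.
  by rewrite subrr sqnorm3_0 mulr_ge0 ?rel_sqnorm_ge0.
have := sqnorm3_subr_le (x j - x ord0) (x i - x ord0).
rewrite opprB addrA subrK => /le_trans; apply; rewrite ler_wpM2l // rel_sqnormE.
rewrite (bigD1 j) //= (bigD1 i) /=; last by rewrite nij.
by rewrite addrA lerDl sumr_ge0 // => p _; apply: sqnorm3_ge0.
Qed.

End Distances.

Section PowerBounds.
Context {R : realType}.
Variables (H beta : R).
Hypotheses (H_ge0 : 0 <= H) (beta_ge0 : 0 <= beta).

Lemma powR1D_ge1 (s : R) : 0 <= s -> 1 <= (1 + s) `^ beta.
Proof.
move=> s_ge0; rewrite [X in X <= _](_ : 1 = 1 `^ beta); last by rewrite powR1.
by apply: ge0_ler_powR; rewrite ?nnegrE ?lerDl ?addr_ge0.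
Qed.

Lemma div_powR1D_le (s t : R) : 0 <= s -> s <= t ->
  H / (1 + t) `^ beta <= H / (1 + s) `^ beta.
Proof.
move=> s_ge0 st; have t_ge0 : 0 <= t by apply: le_trans st.
apply: ler_wpM2l => //; rewrite lef_pV2 ?posrE ?powR_gt0 ?ltr_pwDl //.
by apply: ge0_ler_powR; rewrite ?nnegrE ?addr_ge0 ?lerD2l.
Qed.

Lemma div_powR1D_le_id (s : R) : 0 <= s -> H / (1 + s) `^ beta <= H.
Proof.
move=> s_ge0; have p_ge1 := powR1D_ge1 s_ge0.
by rewrite ler_pdivrMr ?ler_peMr // (lt_le_trans ltr01 p_ge1).
Qed.

End PowerBounds.

Section Weights.
Context {R : realType}.
Variables (H beta : R) (k : nat) (L : 'I_k.+1 -> {set 'I_k.+1}).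
Hypotheses (H_ge0 : 0 <= H) (beta_ge0 : 0 <= beta).

Lemma weight_ge0 x i j : 0 <= weight H beta L x i j.
Proof. by rewrite /weight; case: ifP => // _; rewrite divr_ge0 ?powR_ge0. Qed.

Lemma weight_le x i j : weight H beta L x i j <= H.
Proof.
rewrite /weight; case: ifP => // _.
by rewrite div_powR1D_le_id // divr_ge0 ?sqnorm3_ge0.
Qed.

Lemma weight_leader_ge (B : R) x i j : rel_sqnorm x <= B -> j \in L i ->
  H / (1 + B) `^ beta <= weight H beta L x i j.
Proof.
move=> xB jL; rewrite /weight jL div_powR1D_le ?divr_ge0 ?sqnorm3_ge0 //.
rewrite ler_pdivrMr // mulrC; apply: le_trans (sqnorm3_agents_le x i j) _.
by rewrite ler_wpM2l.
Qed.

Hypothesis L_hier : hierarchical L.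

Lemma degree_le x i : degree H beta L x i <= k%:R * H.
Proof.
apply: le_trans (_ : \sum_(j in L i) H <= _).
  by apply: ler_sum => j _; apply: weight_le.
rewrite sumr_const -[H *+ _]mulr_natl; apply: ler_wpM2r => //; rewrite ler_nat.
have L_sub : L i \subset [set~ i].
  apply/subsetP => j jL; rewrite !inE; apply/eqP => eji.
  by have := L_hier.1 _ _ jL; rewrite eji ltnn.
by have := subset_leq_card L_sub; rewrite cardsC1 card_ord.
Qed.

Lemma degree_ge (B : R) x (i : 'I_k.+1) : rel_sqnorm x <= B -> (0 < i)%N ->
  H / (1 + B) `^ beta <= degree H beta L x i.
Proof.
move=> xB i_gt0; have /set0Pn[j jL] := L_hier.2 i i_gt0.
rewrite /degree (bigD1 j) //= -[leLHS]addr0 lerD ?weight_leader_ge //.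
by rewrite sumr_ge0 // => p _; apply: weight_ge0.
Qed.

End Weights.

Lemma Smx_prec (R : realType) (H beta h B : R) k (L : 'I_k.+1 -> {set 'I_k.+1}) x :
    0 <= H -> 0 <= beta -> 0 <= h -> 2 * (h * (k%:R * H)) <= 1 ->
    hierarchical L -> rel_sqnorm x <= B ->
  mx_prec (Smx H beta h L x) ((1 - h * (H / (1 + B) `^ beta)) *: Tmx R k).
Proof.
move=> H_ge0 beta_ge0 h_ge0 h_small L_hier xB i j; rewrite /Smx /Tmx !mxE.
have := degree_ge H_ge0 beta_ge0 L_hier (i := lift ord0 i) xB isT.
have := degree_le H_ge0 beta_ge0 L_hier x (lift ord0 i).
move: (degree _ _ _ _ _) (H / _) => d dstar d_le d_ge.
have hd_ge : h * dstar <= h * d by rewrite ler_wpM2l.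
have hd_le : h * d <= h * (k%:R * H) by rewrite ler_wpM2l.
have [<-|nij] := eqVneq i j.
  by rewrite leqnn mulr1 mulr1n ler_norml; apply/andP; split; lra.
rewrite sub0r normrN; case: ltnP => [ji|ij].
  have k_ge1 : 1 <= k%:R :> R by rewrite ler1n (leq_ltn_trans (leq0n i) (ltn_ord i)).
  have hH_le : h * H <= h * (k%:R * H) by rewrite mulrCA ler_peMl ?mulr_ge0.
  have hw_le : h * weight H beta L x (lift ord0 i) (lift ord0 j) <= h * H.
    by rewrite ler_wpM2l // weight_le.
  rewrite (ltnW ji) mulr1 mulrN normrN ger0_norm ?mulr_ge0 ?weight_ge0 //; lra.
by rewrite leqNgt ltn_neqAle ij andbT nij mulr0 normr0 mulr0.
Qed.

Unset Implicit Arguments.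

Theorem corollary1 (R : realType) (k : nat) (H beta h B : R)
  (L : 'I_k.+1 -> {set 'I_k.+1}) (X : nat -> 'I_k.+1 -> 'rV[R]_3) :
  (1 <= k)%N -> 0 < H -> 0 < beta -> 0 < h ->
  hierarchical L ->
  (forall n, rel_sqnorm (X n) <= B) ->
  h < (2 * k%:R * H)^-1 ->
  let dstar := H / (1 + B) `^ beta in
  let rho := 1 - h * dstar in
  forall n : nat,
    mx_prec (Smx H beta h L (X n)) (rho *: Tmx R k) /\
    mx_prec (Sprod H beta h L X n) (rho ^+ n *: mxpow (Tmx R k) n).
Proof.
move=> k_ge1 H_gt0 beta_gt0 h_gt0 L_hier XB h_lt dstar rho.
have h_small : 2 * (h * (k%:R * H)) <= 1.
  have kH_gt0 : 0 < 2 * k%:R * H by rewrite !mulr_gt0 // ltr0n.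
  rewrite -(ltr_pM2r kH_gt0) mulVf ?gt_eqF // in h_lt.
  by rewrite mulrCA [2 * _]mulrA ltW.
have S_prec n : mx_prec (Smx H beta h L (X n)) (rho *: Tmx R k).
  exact: Smx_prec (ltW H_gt0) (ltW beta_gt0) (ltW h_gt0) h_small L_hier (XB n).
by move=> n; split; [apply: S_prec | apply: mx_prec_Sprod].
Qed.
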